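(* Let $k$ be a field of characteristic $0$, $A$ a commutative $k$-algebra with an ideal $I$, $I^2=0$, such that $\underline{A}:=A/I$ is smooth over $k$, and let $\tau:\underline{A}\to A$ be a $k$-algebra splitting of $A\to\underline{A}$; regard $A$ as an $\underline{A}$-algebra via $\tau$. Let $B\twoheadrightarrow A$ be a surjection of $\underline{A}$-algebras with $B$ smooth over $\underline{A}$, let $\hat{B}$ be the completion of $B$ along the kernel of this surjection, $\hat{J}$ the kernel of the induced surjection $\hat{B}\to A$, $\hat{I}$ the inverse image of $I$ in $\hat{B}$, and $\hat{\tau}:\underline{A}\to\hat{B}$ the structure map. For $a\in A^\flat$, let $\underline{a}$ be its image in $\underline{A}$, $\hat{\underline{a}}:=\hat\tau(\underline{a})$, and $\tilde{a}\in\hat{B}$ any lift of $a$. Then the class of $$-\frac{1}{2}\,\frac{(\tilde{a}-\hat{\underline{a}})^3}{\hat{\underline{a}}^2(\hat{\underline{a}}-1)^2}$$ in $\hat{J}/\hat{J}^2$ is independent of the choice of the lift $\tilde a$, and it lies in the kernel of the map $\hat{J}/\hat{J}^2\to\Omega^1_{\hat{B}}/\hat{J}\Omega^1_{\hat{B}}$ induced by the (absolute) differential $d$.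
   Context: $A^\flat$ denotes the set of units $a\in A$ such that $1-a$ is also a unit. K\''ahler differentials are relative to $\mathbb{Q}$. *)

From HB Require Import structures.
From mathcomp Require Import all_boot all_order all_algebra.
From mathcomp Require Import finmap.
From mathcomp Require Import mpoly.

Set Implicit Arguments.
Unset Strict Implicit.
Unset Printing Implicit Defensive.
Import GRing.Theory.
Local Open Scope ring_scope.

Definition kernel (R : Type) (S : zmodType) (f : R -> S) : R -> Prop :=
  fun x => f x = 0.

Definition is_unit (R : comNzRingType) (x : R) : Prop := exists y, x * y = 1.

Definition flat (R : comNzRingType) (a : R) : Prop := is_unit a /\ is_unit (1 - a).

Fixpoint ideal_pow (R : comNzRingType) (K : R -> Prop) (n : nat) : R -> Prop :=
  match n with
  | 0 => fun _ => True
  | n.+1 => fun x => exists s : seq (R * R),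
      (forall p, p \in s -> ideal_pow K n p.1 /\ K p.2) /\
      x = \sum_(p <- s) p.1 * p.2
  end.

Definition ideal_mod (R : comNzRingType) (M : lmodType R) (J : R -> Prop) : M -> Prop :=
  fun v => exists s : seq (R * M),
      (forall p, p \in s -> J p.1) /\ v = \sum_(p <- s) p.1 *: p.2.

(* (absolute, i.e. over Z, equivalently over Q in characteristic 0)
   derivation of R with values in an R-module M *)
Definition derivation (R : comNzRingType) (M : lmodType R) (D : R -> M) : Prop :=
  (forall x y, D (x + y) = D x + D y) /\
  (forall x y, D (x * y) = x *: D y + y *: D x).

Definition alg_hom (R : comNzRingType) (S T : comAlgType R) (f : S -> T) : Prop :=
  (forall x y, f (x + y) = f x + f y) /\ (forall x y, f (x * y) = f x * f y) /\
  f 1 = 1 /\ (forall (c : R) x, f (c *: x) = c *: f x).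

Definition finitely_presented (R : comNzRingType) (S : comAlgType R) : Prop :=
  exists (n : nat) (v : 'I_n -> S),
    let ev := mpoly.mmap (fun r : R => r%:A) v in
    (forall s : S, exists p : mpoly.mpoly n R, ev p = s) /\
    exists gs : seq (mpoly.mpoly n R),
      forall p : mpoly.mpoly n R,
        ev p = 0 <-> exists cs : seq (mpoly.mpoly n R),
          p = \sum_(i < size gs) cs`_i * gs`_i.

Definition formally_smooth (R : comNzRingType) (S : comAlgType R) : Prop :=
  forall (C D : comAlgType R) (p : C -> D),
    alg_hom p -> (forall d, exists c, p c = d) ->
    (forall x y, p x = 0 -> p y = 0 -> x * y = 0) ->
    forall f : S -> D, alg_hom f ->
      exists g : S -> C, alg_hom g /\ (forall s, p (g s) = f s).

Definition smooth (R : comNzRingType) (S : comAlgType R) : Prop :=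
  finitely_presented S /\ formally_smooth S.

Definition flat_elt (R : comUnitRingType) (t u : R) : R :=
  - (2%:R)^-1 * (t - u) ^+ 3 / (u ^+ 2 * (u - 1) ^+ 2).

From HB Require Import structures.
From mathcomp Require Import all_boot all_order all_algebra.
From mathcomp Require Import ring.

Set Implicit Arguments.
Unset Strict Implicit.
Unset Printing Implicit Defensive.
Import GRing.Theory.
Local Open Scope ring_scope.

(* Write x := ã - â, so that the element is x^3 c.  Since ã and â both map to
   a modulo I, x lies in the preimage Î of I, and Î Î ⊆ Ĵ because I^2 = 0.
   Hence x^3 c ∈ Ĵ; the difference for two lifts factors as
   (x1 - x2) (x1^2 + x1 x2 + x2^2) c ∈ Ĵ Ĵ; and by the Leibniz rule
   d(x^3 c) = x^3 dc + 3 x^2 c dx ∈ Ĵ Ω. *)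

Definition flat_coef (R : comUnitRingType) (u : R) : R :=
  - (2%:R)^-1 / (u ^+ 2 * (u - 1) ^+ 2).

Lemma flat_eltE (R : comUnitRingType) (t u : R) :
  flat_elt t u = (t - u) ^+ 3 * flat_coef u.
Proof. by rewrite /flat_elt /flat_coef; ring. Qed.

Lemma alg_homB (R : comNzRingType) (S T : comAlgType R) (f : S -> T) x y :
  alg_hom f -> f (x - y) = f x - f y.
Proof. by case=> fD _; rewrite -[in f x](subrK y x) [f (_ + y)]fD addrK. Qed.

Section IdealPowers.
Variables (R : comNzRingType) (K : R -> Prop).

Lemma ideal_pow1 x : K x -> ideal_pow K 1 x.
Proof. by exists [:: (1, x)]; rewrite big_seq1 mul1r; split=> // p /[!inE] /eqP ->. Qed.

Lemma ideal_pow2_mul x y : K x -> K y -> ideal_pow K 2 (x * y).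
Proof.
move=> Kx Ky; exists [:: (x, y)]; rewrite big_seq1; split=> // p /[!inE] /eqP ->.
by split; [apply: ideal_pow1 | ].
Qed.

Variable M : lmodType R.

Lemma ideal_modZ r (m : M) : K r -> ideal_mod K (r *: m).
Proof. by exists [:: (r, m)]; rewrite big_seq1; split=> // p /[!inE] /eqP ->. Qed.

Lemma ideal_modD (u v : M) : ideal_mod K u -> ideal_mod K v -> ideal_mod K (u + v).
Proof.
move=> [su [Ksu ->]] [sv [Ksv ->]]; exists (su ++ sv); rewrite big_cat.
by split=> // p; rewrite mem_cat => /orP[/Ksu | /Ksv].
Qed.

End IdealPowers.

Lemma derivationX (R : comNzRingType) (M : lmodType R) (D : R -> M) x n :
  derivation D -> D (x ^+ n.+1) = (x ^+ n *+ n.+1) *: D x.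
Proof.
case=> _ DM; elim: n => [|n IHn]; first by rewrite expr1 expr0 scale1r.
by rewrite exprS DM IHn scalerA mulrnAr -exprS -scalerDl -mulrSr.
Qed.

Section SquareZeroPreimage.
Variables (R S : comNzRingType) (f : {rmorphism R -> S}) (I : S -> Prop).
Hypothesis I_sq0 : forall u v, I u -> I v -> u * v = 0.

Lemma kernel_mul_sq0 x y c : I (f x) -> I (f y) -> kernel f (x * y * c).
Proof. by move=> Ix Iy; rewrite /kernel !rmorphM (I_sq0 Ix Iy) mul0r. Qed.

Lemma cube_mul_kernel x c : I (f x) -> kernel f (x ^+ 3 * c).
Proof.
have -> : x ^+ 3 * c = x * x * (x * c) by ring.
by move=> Ix; apply: kernel_mul_sq0.
Qed.

Lemma cube_mul_sub_ideal_pow2 x1 x2 c :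
  I (f x1) -> f x1 = f x2 -> ideal_pow (kernel f) 2 (x1 ^+ 3 * c - x2 ^+ 3 * c).
Proof.
move=> Ix1 f12; have Ix2 : I (f x2) by rewrite -f12.
have -> : x1 ^+ 3 * c - x2 ^+ 3 * c
          = (x1 - x2) * (x1 * x1 * c + x1 * x2 * c + x2 * x2 * c) by ring.
apply: ideal_pow2_mul; first by rewrite /kernel rmorphB f12 subrr.
by rewrite /kernel !rmorphD !kernel_mul_sq0 ?addr0.
Qed.

Lemma derivation_cube_mul_ideal_mod (M : lmodType R) (D : R -> M) x c :
  derivation D -> I (f x) -> ideal_mod (kernel f) (D (x ^+ 3 * c)).
Proof.
move=> dD Ix; have [_ DM] := dD.
rewrite DM derivationX // scalerA; apply: ideal_modD; apply: ideal_modZ.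
  by rewrite -[x ^+ 3]mulr1; apply: cube_mul_kernel.
have -> : c * (x ^+ 2 *+ 3) = x * x * (c *+ 3) by ring.
exact: kernel_mul_sq0.
Qed.

End SquareZeroPreimage.

Theorem proposition3p2
  (* the field k of characteristic 0 *)
  (k : fieldType) (chark : [pchar k] =i pred0)
  (* A, its square-zero ideal I := ker pi, and A_ := A/I presented by pi *)
  (A Abar : comAlgType k) (pi : A -> Abar) (pi_alg : alg_hom pi)
  (pi_surj : forall y, exists x, pi x = y)
  (I_sq0 : forall x y, pi x = 0 -> pi y = 0 -> x * y = 0)
  (Abar_smooth : smooth Abar)
  (* the k-algebra splitting tau *)
  (tau : Abar -> A) (tau_alg : alg_hom tau) (tau_split : forall y, pi (tau y) = y)
  (* B smooth over A_ with a surjection phi : B ->> A of A_-algebras *)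
  (B : comAlgType Abar) (B_smooth : smooth B)
  (phi : {rmorphism B -> A}) (phi_surj : forall x, exists b, phi b = x)
  (phi_lin : forall r : Abar, phi (r%:A) = tau r)
  (* quotients Q n = B / K^(n+1), K := ker phi, with transition maps *)
  (Q : nat -> comNzRingType) (q : forall n, {rmorphism B -> Q n})
  (q_surj : forall n y, exists b, q n b = y)
  (q_ker : forall n b, q n b = 0 <-> ideal_pow (kernel phi) n.+1 b)
  (t : forall n, {rmorphism Q n.+1 -> Q n})
  (t_q : forall n b, t n (q n.+1 b) = q n b)
  (* Bhat = lim_n B / K^(n+1), the K-adic completion of B *)
  (Bhat : comUnitRingType) (rho : forall n, {rmorphism Bhat -> Q n})
  (rho_t : forall n x, t n (rho n.+1 x) = rho n x)
  (rho_lim : forall y : (forall n, Q n), (forall n, t n (y n.+1) = y n) ->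
       exists x, (forall n, rho n x = y n) /\
                 forall x', (forall n, rho n x' = y n) -> x' = x)
  (iota : {rmorphism B -> Bhat}) (rho_iota : forall n b, rho n (iota b) = q n b)
  (* the induced surjection psi : Bhat ->> A *)
  (psi : {rmorphism Bhat -> A})
  (psi_def : forall x b, rho 0%N x = q 0%N b -> psi x = phi b) :
  let Jhat := kernel psi in
  let tauhat := fun r : Abar => iota (r%:A) in
  forall a : A, flat a ->
    let ahat := tauhat (pi a) in
    (* the class in Jhat/Jhat^2 is well defined and independent of the lift *)
    (forall at1 : Bhat, psi at1 = a -> Jhat (flat_elt at1 ahat)) /\
    (forall at1 at2 : Bhat, psi at1 = a -> psi at2 = a ->
       ideal_pow Jhat 2 (flat_elt at1 ahat - flat_elt at2 ahat)) /\
    (* it lies in the kernel of Jhat/Jhat^2 -> Omega^1_Bhat / Jhat Omega^1_Bhat: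
       for every derivation D of Bhat into a Bhat-module M, D(elt) \in Jhat M *)
    (forall at1 : Bhat, psi at1 = a ->
       forall (M : lmodType Bhat) (D : Bhat -> M), derivation D ->
         ideal_mod Jhat (D (flat_elt at1 ahat))).
Proof.
(* Invertibility of a and 1 - a only matters for the denominator, whose
   value never enters the argument. *)
move=> Jhat tauhat a _ ahat.
have psi_ahat : psi ahat = tau (pi a).
  by rewrite -phi_lin; apply: psi_def; rewrite rho_iota.
have lift_in_Ihat at1 : psi at1 = a -> pi (psi (at1 - ahat)) = 0.
  by move=> lift; rewrite rmorphB lift psi_ahat alg_homB // tau_split subrr.
split; [|split].
- move=> at1 /lift_in_Ihat Ix; rewrite flat_eltE.
  exact: (cube_mul_kernel I_sq0).
- move=> at1 at2 h1 h2; rewrite !flat_eltE.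
  apply: (cube_mul_sub_ideal_pow2 I_sq0); first exact: lift_in_Ihat.
  by rewrite !rmorphB h1 h2.
- move=> at1 /lift_in_Ihat Ix M D dD; rewrite flat_eltE.
  exact: (derivation_cube_mul_ideal_mod I_sq0).
Qed.
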